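(* Let $F:\mathbb{R}^n\rightrightarrows\mathbb{R}^n$ be a (possibly multi-valued) mapping. Consider the discrete-time system with state $x_t\in\mathbb{R}^n$, input $u_t\in\mathbb{R}^n$ and output $y_t\in\mathbb{R}^n$ given by $$x_{t+1}=x_t+u_t,\qquad y_t\in F(x_t+u_t),\qquad t\in\mathbb{N}_0 .$$ Then $F$ has a convex primitive, i.e. there exists a convex function $f:\mathbb{R}^n\to\mathbb{R}$ with $F(x)\subset\partial f(x)$ for all $x\in\mathbb{R}^n$, if and only if this system is passive.
   Context: A trajectory $t\mapsto(x_t,u_t,y_t)$, $t\in\mathbb{N}_0$, is admissible if $x_{t+1}=x_t+u_t$ and $y_t\in F(x_t+u_t)$ for all $t\in\mathbb{N}_0$. The system is passive if there exists a storage function $V:\mathbb{R}^n\to\mathbb{R}$ (which is not required to be nonnegative or bounded from below) such that $V(x_{t_2})\le V(x_{t_1})+\sum_{t=t_1}^{t_2-1}u_t^\top y_t$ for all admissible trajectories and all $t_1,t_2\in\mathbb{N}_0$ with $t_1\le t_2$. $\partial f$ denotes the subdifferential of the convex function $f$. *)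

From HB Require Import structures.
From mathcomp Require Import all_boot all_order all_algebra.
From mathcomp Require Import boolp classical_sets reals.
Set Implicit Arguments. Unset Strict Implicit. Unset Printing Implicit Defensive.
Import Order.TTheory GRing.Theory Num.Theory.
Local Open Scope ring_scope.
Local Open Scope classical_set_scope.

Definition dotv (R : pzRingType) (n : nat) (u v : 'rV[R]_n) : R :=
  \sum_(i < n) u 0 i * v 0 i.

Definition convex_fun (R : realType) (n : nat) (f : 'rV[R]_n -> R) : Prop :=
  forall (a b : 'rV[R]_n) (l : R), 0 <= l -> l <= 1 ->
    f (l *: a + (1 - l) *: b) <= l * f a + (1 - l) * f b.

Definition subdiff (R : realType) (n : nat) (f : 'rV[R]_n -> R) (x : 'rV[R]_n)
  : set 'rV[R]_n :=
  [set g | forall z : 'rV[R]_n, f x + dotv g (z - x) <= f z].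

Definition admissible (R : realType) (n : nat) (F : 'rV[R]_n -> set 'rV[R]_n)
  (x u y : nat -> 'rV[R]_n) : Prop :=
  forall t : nat, x t.+1 = x t + u t /\ F (x t + u t) (y t).

(* Passivity, with a real-valued storage function (no sign/boundedness condition). *)
Definition passive (R : realType) (n : nat) (F : 'rV[R]_n -> set 'rV[R]_n) : Prop :=
  exists V : 'rV[R]_n -> R,
    forall x u y : nat -> 'rV[R]_n, admissible F x u y ->
    forall t1 t2 : nat, (t1 <= t2)%N ->
      V (x t2) <= V (x t1) + \sum_(t1 <= t < t2) dotv (u t) (y t).

(* If F is contained in the subdifferential of f, the subgradient inequality at x_{t+1} is exactly
   the one-step dissipation inequality with storage f.  Conversely, a one-step trajectory from x
   to z shows that every storage function V dominates the affine functions
   x |-> V z + <w, x - z> for w in F z; their supremum is convex, lies below V and touches V on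
   the domain of F, so each w in F x is a subgradient of it at x. *)
From HB Require Import structures.
From mathcomp Require Import all_boot all_order all_algebra.
From mathcomp Require Import boolp classical_sets reals.
From mathcomp Require Import ring.
Set Implicit Arguments. Unset Strict Implicit. Unset Printing Implicit Defensive.
Import Order.TTheory GRing.Theory Num.Theory.
Local Open Scope ring_scope.
Local Open Scope classical_set_scope.

Lemma dotvC (R : comPzRingType) (n : nat) (u v : 'rV[R]_n) : dotv u v = dotv v u.
Proof. by apply: eq_bigr => i _; rewrite mulrC. Qed.

Lemma dotvNr (R : pzRingType) (n : nat) (u v : 'rV[R]_n) : dotv u (- v) = - dotv u v.
Proof. by rewrite /dotv -sumrN; apply: eq_bigr => i _; rewrite mxE mulrN. Qed.

Lemma ler_telescope (R : numDomainType) (a s : nat -> R) (m k : nat) :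
  (m <= k)%N -> (forall t, a t.+1 <= a t + s t) ->
  a k <= a m + \sum_(m <= t < k) s t.
Proof.
move=> le_mk step; rewrite -lerBlDl -telescope_sumr //.
by apply: ler_sum => t _; rewrite lerBlDl.
Qed.

Lemma convex_fun_affine (R : realType) (n : nat) (c : R) (w z : 'rV[R]_n) :
  convex_fun (fun x => c + dotv w (x - z)).
Proof.
move=> a b l _ _; rewrite le_eqVlt; apply/predU1P; left.
rewrite /dotv !mulrDr !mulr_sumr addrACA -big_split /=.
congr (_ + _); first by ring.
by apply: eq_bigr => i _; rewrite !mxE; ring.
Qed.

Lemma convex_fun_sup (R : realType) (n : nat) (I : Type) (A : set I)
    (g : I -> 'rV[R]_n -> R) :
  (forall x, has_ubound [set g i x | i in A]) ->
  (forall i, A i -> convex_fun (g i)) ->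
  convex_fun (fun x => sup [set g i x | i in A]).
Proof.
move=> g_ub g_cvx a b l l_ge0 l_le1.
have [->|/set0P [i0 Ai0]] := eqVneq A set0.
  by rewrite !image_set0 sup0 !mulr0 addr0.
have g_sup x i : A i -> g i x <= sup [set g j x | j in A].
  move=> Ai; apply: sup_upper_bound; last by exists i.
  by split; [exists (g i0 x), i0 | exact: g_ub].
apply: ge_sup; first by exists (g i0 (l *: a + (1 - l) *: b)), i0.
move=> _ [i Ai <-]; apply: le_trans (g_cvx i Ai a b l l_ge0 l_le1) _.
by apply: lerD; apply: ler_wpM2l; rewrite ?subr_ge0 ?g_sup.
Qed.

Definition dissipative (R : realType) (n : nat) (F : 'rV[R]_n -> set 'rV[R]_n)
    (V : 'rV[R]_n -> R) : Prop :=
  forall x u y, F (x + u) y -> V (x + u) <= V x + dotv u y.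

Lemma passiveP (R : realType) (n : nat) (F : 'rV[R]_n -> set 'rV[R]_n) :
  passive F <-> exists V, dissipative F V.
Proof.
split=> [[V V_storage]|[V V_diss]]; exists V.
- move=> x u y Fy.
  pose xs t : 'rV[R]_n := if t is 0 then x else x + u.
  pose us t : 'rV[R]_n := if t is 0 then u else 0.
  have adm : admissible F xs us (fun=> y) by case=> [|t] //=; rewrite addr0.
  by have := V_storage _ _ _ adm 0 1 erefl; rewrite big_nat1.
- move=> xs us ys adm t1 t2 le_t12; apply: (ler_telescope (a := V \o xs)) => // t /=.
  by have [-> Fy] := adm t; exact: V_diss.
Qed.

Lemma subdiff_dissipative (R : realType) (n : nat) (F : 'rV[R]_n -> set 'rV[R]_n)
    (f : 'rV[R]_n -> R) :
  (forall x, F x `<=` subdiff f x) -> dissipative F f.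
Proof.
move=> F_sub x u y /F_sub /(_ x).
by rewrite opprD addNKr dotvNr dotvC lerBlDr.
Qed.

Section SupportEnvelope.
Variables (R : realType) (n : nat) (F : 'rV[R]_n -> set 'rV[R]_n) (V : 'rV[R]_n -> R).

Definition support_envelope (x : 'rV[R]_n) : R :=
  sup [set V p.1 + dotv p.2 (x - p.1) | p in [set p | F p.1 p.2]].

Hypothesis V_diss : dissipative F V.

Lemma support_le_storage x z w : F z w -> V z + dotv w (x - z) <= V x.
Proof.
move=> Fzw; have := V_diss (x := x) (u := z - x); rewrite subrKC => /(_ w Fzw).
by rewrite dotvC -opprB dotvNr lerBrDr.
Qed.

Lemma storage_ubound_supports x :
  ubound [set V p.1 + dotv p.2 (x - p.1) | p in [set p | F p.1 p.2]] (V x).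
Proof. by move=> _ [p Fp <-]; exact: support_le_storage. Qed.

Lemma support_le_envelope x z w : F z w ->
  V z + dotv w (x - z) <= support_envelope x.
Proof.
move=> Fzw; apply: sup_upper_bound; last by exists (z, w).
split; first by exists (V z + dotv w (x - z)), (z, w).
by exists (V x); exact: storage_ubound_supports.
Qed.

Lemma envelope_le_storage x w : F x w -> support_envelope x <= V x.
Proof.
move=> Fxw; apply: ge_sup; last exact: storage_ubound_supports.
by exists (V x + dotv w (x - x)), (x, w).
Qed.

Lemma convex_support_envelope : convex_fun support_envelope.
Proof.
apply: convex_fun_sup => [x|p _]; last exact: convex_fun_affine.
by exists (V x); exact: storage_ubound_supports.
Qed.

Lemma support_envelope_subdiff x : F x `<=` subdiff support_envelope x.
Proof.
move=> w Fxw z /=; apply: le_trans (support_le_envelope z Fxw).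
by rewrite lerD2r (envelope_le_storage Fxw).
Qed.

End SupportEnvelope.

Theorem theorem3 (R : realType) (n : nat) (F : 'rV[R]_n -> set 'rV[R]_n) :
  (exists f : 'rV[R]_n -> R, convex_fun f /\ forall x : 'rV[R]_n, F x `<=` subdiff f x)
  <-> passive F.
Proof.
split=> [[f [_ F_sub]]|/passiveP [V V_diss]].
  by apply/passiveP; exists f; exact: subdiff_dissipative.
exists (support_envelope F V); split; first exact: convex_support_envelope.
exact: support_envelope_subdiff.
Qed.
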